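(* Let $K\in\mathcal{K}$ and let $L_0\in\mathbb{R}^{q\times n}$ be such that $A_K+DL_0$ is Hurwitz. Define recursively, for $j=0,1,2,\dots$, $P^{j}$ as the solution of $$(A_K+DL_j)^\top P^{j}+P^{j}(A_K+DL_j)+Q_K-\gamma^2L_j^\top L_j=0,$$ and $L_{j+1}=\gamma^{-2}D^\top P^{j}$. Then for every $j\in\mathbb{N}_+$: (1) $A_K+DL_j$ is Hurwitz; (2) $P_K\succeq\cdots\succeq P^{j+1}\succeq P^{j}\succeq\cdots\succeq P^{0}$; (3) $\lim_{j\to\infty}\|P^{j}-P_K\|_F=0$.
   Context: Let $A\in\mathbb{R}^{n\times n}$, $B\in\mathbb{R}^{n\times m}$, $C\in\mathbb{R}^{p\times n}$, $D\in\mathbb{R}^{n\times q}$, $E\in\mathbb{R}^{p\times m}$, $\gamma>0$, with $Q:=C^\top C\succ 0$, $E^\top C=0$, $R:=E^\top E\succ 0$. For $K\in\mathbb{R}^{m\times n}$ set $A_K=A-BK$, $Q_K=Q+K^\top RK$, $T_{zw}(K)(s)=(C-EK)(sI-A+BK)^{-1}D$, and $\mathcal{K}=\{K:\ A_K\text{ Hurwitz},\ \|T_{zw}(K)\|_{\mathcal{H}_\infty}<\gamma\}$, where $\|G\|_{\mathcal{H}_\infty}=\sup_{\omega\in\mathbb{R}}\bar\sigma(G(j\omega))$. For $K\in\mathcal{K}$, $P_K$ denotes the unique symmetric positive definite solution of $A_K^\top P+PA_K+Q_K+\gamma^{-2}PDD^\top P=0$ for which $A_K+\gamma^{-2}DD^\top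 P_K$ is Hurwitz. $\|\cdot\|_F$ is the Frobenius norm. *)

From HB Require Import structures.
From mathcomp Require Import all_boot all_order all_algebra.
From mathcomp Require Import all_classical all_reals all_analysis.
From mathcomp Require Import complex.

Set Implicit Arguments.
Unset Strict Implicit.
Unset Printing Implicit Defensive.

Import Order.TTheory GRing.Theory Num.Theory.
Local Open Scope ring_scope.

Section Defs.
Variable R : realType.

Definition cmx (m n : nat) (M : 'M[R]_(m, n)) : 'M[R[i]]_(m, n) :=
  map_mx (fun x => x%:C%C) M.

Definition hurwitz (n : nat) (A : 'M[R]_n) : Prop :=
  forall lam : R[i], eigenvalue (cmx A) lam -> complex.Re lam < 0.

Definition symmetric (n : nat) (M : 'M[R]_n) : Prop := M^T = M.

Definition posdef (n : nat) (M : 'M[R]_n) : Prop :=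
  symmetric M /\ forall x : 'cV[R]_n, x != 0 -> 0 < (x^T *m M *m x) 0 0.

Definition possemidef (n : nat) (M : 'M[R]_n) : Prop :=
  symmetric M /\ forall x : 'cV[R]_n, 0 <= (x^T *m M *m x) 0 0.

Definition loewner_le (n : nat) (X Y : 'M[R]_n) : Prop := possemidef (Y - X).

Definition ctrmx (m n : nat) (M : 'M[R[i]]_(m, n)) : 'M[R[i]]_(n, m) :=
  map_mx (fun z => z^*%C) M^T.

Definition maxsv (m n : nat) (M : 'M[R[i]]_(m, n)) : R :=
  sup [set Num.sqrt (complex.Re lam) | lam in
        [set lam : R[i] | eigenvalue (ctrmx M *m M) lam]].

Definition Tzw (n m p q : nat) (A : 'M[R]_n) (B : 'M[R]_(n, m))
  (C : 'M[R]_(p, n)) (D : 'M[R]_(n, q)) (E : 'M[R]_(p, m))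
  (K : 'M[R]_(m, n)) (w : R) : 'M[R[i]]_(p, q) :=
  cmx (C - E *m K) *m invmx ((0 +i* w)%C *: 1%:M - cmx (A - B *m K)) *m cmx D.

(* ||T_zw(K)||_{H_infty} < gamma, where the H_infty norm is
   sup_{w in R} maxsv (T_zw(K)(j w)); "sup < gamma" is unfolded as
   "bounded by some c < gamma". *)
Definition hinf_lt (n m p q : nat) (A : 'M[R]_n) (B : 'M[R]_(n, m))
  (C : 'M[R]_(p, n)) (D : 'M[R]_(n, q)) (E : 'M[R]_(p, m))
  (K : 'M[R]_(m, n)) (gamma : R) : Prop :=
  exists2 c : R, c < gamma & forall w : R, maxsv (Tzw A B C D E K w) <= c.

Definition admissible (n m p q : nat) (A : 'M[R]_n) (B : 'M[R]_(n, m))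
  (C : 'M[R]_(p, n)) (D : 'M[R]_(n, q)) (E : 'M[R]_(p, m))
  (gamma : R) (K : 'M[R]_(m, n)) : Prop :=
  hurwitz (A - B *m K) /\ hinf_lt A B C D E K gamma.

Definition frob (m n : nat) (M : 'M[R]_(m, n)) : R :=
  Num.sqrt (\sum_(i < m) \sum_(j < n) M i j ^+ 2).

End Defs.

From HB Require Import structures.
From mathcomp Require Import all_boot all_order all_algebra.
From mathcomp Require Import all_classical all_reals all_analysis.
From mathcomp Require Import complex.
From mathcomp.algebra_tactics Require Import ring.

Import Order.TTheory GRing.Theory Num.Theory numFieldNormedType.Exports.
Local Open Scope ring_scope.
Local Open Scope classical_set_scope.

Set Implicit Arguments.
Unset Strict Implicit.
Unset Printing Implicit Defensive.

(* Write X_j := P_K - P^j and b_j := gamma (L_j - gamma^-2 D^T P_K).  With the Hurwitz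
   matrix A* := A_K + gamma^-2 D D^T P_K and H := gamma^-1 D, the Riccati equation of P_K
   minus the Lyapunov equation of P^j reads  lyap (A* + H b_j) X_j + b_j^T b_j = 0,  and the
   update is  b_{j+1} = - H^T X_j.  Completing the square rewrites the j-th equation for the
   next closed loop A* + H b_{j+1}, now forced by b_{j+1}^T b_{j+1} + (b_j - b_{j+1})^T (b_j - b_{j+1}).
   By induction: X_j is positive semidefinite, because a Lyapunov equation with a Hurwitz
   matrix and semidefinite forcing has a semidefinite solution (Schur triangularisation and
   Schur complements); A* + H b_{j+1} is Hurwitz, because on an eigenvector x with
   Re lambda >= 0 the equation forces b_{j+1} x = 0, so that x is an eigenvector of the
   Hurwitz A*; and X_j - X_{j+1} is semidefinite, by subtracting consecutive equations.
   The nonincreasing semidefinite X_j converge to some X, and in the limit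
   lyap A* (- X) + X H H^T X = 0, so that - X is semidefinite as well and X = 0. *)

Ltac mxring := apply/matrixP => ? ?; rewrite !mxE; ring.

Section Eigenvalues.
Variable F : fieldType.

Lemma eigenvalue_unitmx n (g : 'M[F]_n) a : eigenvalue g a = (g - a%:M \notin unitmx).
Proof. by rewrite /eigenvalue /eigenspace kermx_eq0 row_free_unit. Qed.

Lemma eigenvalue_tr n (g : 'M[F]_n) a : eigenvalue g^T a = eigenvalue g a.
Proof. by rewrite !eigenvalue_unitmx -unitmx_tr linearB /= trmxK tr_scalar_mx. Qed.

Lemma eigenvalue_trig n (T : 'M[F]_n) i : is_trig_mx T -> eigenvalue T (T i i).
Proof.
move=> Ttrig; rewrite eigenvalue_unitmx unitmxE det_trig; last first.
  apply/is_trig_mxP => k j ltkj; rewrite !mxE (is_trig_mxP Ttrig) // add0r.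
  have /negPf-> : k != j by apply: contraTneq ltkj => ->; rewrite ltnn.
  by rewrite mulr0n oppr0.
by rewrite unitfE negbK (bigD1 i) //= !mxE eqxx mulr1n subrr mul0r.
Qed.

End Eigenvalues.

Section ComplexLyapunov.
Variable C : numClosedFieldType.
Local Open Scope sesquilinear_scope.

Lemma trmxC_mul m n p (A : 'M[C]_(m, n)) (B : 'M[C]_(n, p)) :
  (A *m B)^t* = B^t* *m A^t*.
Proof. by rewrite trmx_mul map_mxM. Qed.

Lemma trmxCD m n (A B : 'M[C]_(m, n)) : (A + B)^t* = A^t* + B^t*.
Proof. by apply/matrixP=> i j; rewrite !mxE rmorphD. Qed.

Lemma trmxCN m n (A : 'M[C]_(m, n)) : (- A)^t* = - A^t*.
Proof. by apply/matrixP=> i j; rewrite !mxE rmorphN. Qed.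

Lemma trmxCZ m n a (A : 'M[C]_(m, n)) : (a *: A)^t* = a^* *: A^t*.
Proof. by apply/matrixP=> i j; rewrite !mxE rmorphM. Qed.

Lemma trmxC0 m n : (0 : 'M[C]_(m, n))^t* = 0.
Proof. by apply/matrixP=> i j; rewrite !mxE rmorph0. Qed.

Lemma trmxC_scalar n a : (a%:M : 'M[C]_n)^t* = a^*%:M.
Proof. by apply/matrixP=> i j; rewrite !mxE rmorphMn eq_sym. Qed.

Lemma trmxC_block m1 m2 n1 n2 (Aul : 'M[C]_(m1, n1)) (Aur : 'M[C]_(m1, n2))
    (Adl : 'M[C]_(m2, n1)) (Adr : 'M[C]_(m2, n2)) :
  (block_mx Aul Aur Adl Adr)^t* = block_mx (Aul^t*) (Adl^t*) (Aur^t*) (Adr^t*).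
Proof. by rewrite tr_block_mx map_block_mx. Qed.

Lemma trmxC_col m1 m2 n (Au : 'M[C]_(m1, n)) (Ad : 'M[C]_(m2, n)) :
  (col_mx Au Ad)^t* = row_mx (Au^t*) (Ad^t*).
Proof. by rewrite tr_col_mx map_row_mx. Qed.

Definition psdmx n (M : 'M[C]_n) := forall x : 'cV[C]_n, 0 <= (x^t* *m M *m x) 0 0.

Lemma psdmx_congr m n (W : 'M[C]_m) (G : 'M[C]_(m, n)) :
  psdmx W -> psdmx (G^t* *m W *m G).
Proof. by move=> pW x; rewrite -!mulmxA !mulmxA -trmxC_mul -mulmxA; exact: pW. Qed.

Lemma trmxC_congr m n (W : 'M[C]_m) (G : 'M[C]_(m, n)) :
  W^t* = W -> (G^t* *m W *m G)^t* = G^t* *m W *m G.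
Proof. by move=> hW; rewrite !trmxC_mul trmxCK hW mulmxA. Qed.

Lemma cnorm_ge0 n (x : 'cV[C]_n) : 0 <= (x^t* *m x) 0 0.
Proof. by rewrite mxE sumr_ge0 // => i _; rewrite !mxE mulrC mul_conjC_ge0. Qed.

Lemma cnorm_eq0 n (x : 'cV[C]_n) : (x^t* *m x) 0 0 = 0 -> x = 0.
Proof.
rewrite mxE => /eqP; rewrite psumr_eq0 => [/allP x0|i _]; last first.
  by rewrite !mxE mulrC mul_conjC_ge0.
apply/matrixP => i j; rewrite ord1 mxE; apply/eqP.
by have := x0 i (mem_index_enum i); rewrite implyTb !mxE mulrC mul_conjC_eq0.
Qed.

Lemma psdmx_gram m n (F : 'M[C]_(m, n)) : psdmx (F^t* *m F).
Proof. by move=> x; rewrite mulmxA -trmxC_mul -mulmxA cnorm_ge0. Qed.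

Lemma block_qform n (k : C) (z : 'cV[C]_n) (w : C) (v : 'rV[C]_n) (W2 : 'M[C]_n) :
  ((col_mx k%:M z)^t* *m block_mx w%:M v (v^t*) W2 *m col_mx k%:M z) 0 0 =
  k^* * w * k + k^* * (v *m z) 0 0 + ((v *m z) 0 0)^* * k + (z^t* *m W2 *m z) 0 0.
Proof.
have vz : ((v *m z) 0 0)^* = (z^t* *m v^t*) 0 0 by rewrite -trmxC_mul !mxE.
rewrite vz trmxC_col mul_row_block mul_row_col !mulmxDl trmxC_scalar.
rewrite !mul_scalar_mx -!scalemxAl !mul_mx_scalar !mxE eqxx mulr1n; ring.
Qed.

Lemma psdmx_block_dr n w (v : 'rV[C]_n) (W2 : 'M[C]_n) :
  psdmx (block_mx w%:M v (v^t*) W2) -> psdmx W2.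
Proof.
move=> pW z; have := pW (col_mx 0%:M z).
by rewrite block_qform rmorph0 !mul0r !mulr0 !add0r.
Qed.

Lemma psdmx_block_corner n (v : 'rV[C]_n) (W2 : 'M[C]_n) :
  psdmx (block_mx 0%:M v (v^t*) W2) -> v = 0.
Proof.
(* Otherwise g := v v^* > 0, and the test vector (-r, v^* ) with r := (q + 1) / 2g
   gives the value -1. *)
move=> pW; suff /cnorm_eq0 : ((v^t*)^t* *m v^t*) 0 0 = 0.
  by move/(congr1 (fun x => x^t*)); rewrite trmxCK trmxC0.
rewrite trmxCK; set g := (v *m v^t*) 0 0; set q := (v *m W2 *m v^t*) 0 0.
have q0 : 0 <= q by have := psdmx_block_dr pW (v^t*); rewrite trmxCK.
have := cnorm_ge0 (v^t*); rewrite trmxCK -/g le_eqVlt => /predU1P[<-//|gpos].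
exfalso.
pose r := (q + 1) / (2 * g).
have := pW (col_mx (- r)%:M (v^t*)); rewrite block_qform trmxCK -/g -/q.
have rr : (- r)^* = - r.
  apply: conj_Creal; rewrite rpredN ger0_real //.
  by rewrite divr_ge0 ?addr_ge0 ?mulr_ge0 ?(ltW gpos).
have gg : g^* = g by rewrite geC0_conj ?(ltW gpos).
rewrite rr gg mulr0 mul0r add0r (_ : _ + _ + q = - (2 * g * r) + q); last by ring.
rewrite /r mulrCA mulfV ?mulf_neq0 ?pnatr_eq0 ?gt_eqF // mulr1.
by rewrite opprD addrC addNKr oppr_ge0 ler10.
Qed.

Lemma psdmx_schur_block n (eta : C) (y : 'cV[C]_n) (Z : 'M[C]_n) :
  0 <= eta -> (eta = 0 -> y = 0) -> psdmx Z ->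
  psdmx (block_mx eta%:M (y^t*) y (Z + eta^-1 *: (y *m y^t*))).
Proof.
move=> eta0 y0 pZ x; rewrite -[x]vsubmxK [usubmx x]mx11_scalar.
rewrite -[y in block_mx _ _ y]trmxCK block_qform.
set k := usubmx x 0 0; set z := dsubmx x; set b := (y^t* *m z) 0 0.
have zy : (z^t* *m y) 0 0 = b^* by rewrite /b -[z^t* *m y]trmxCK trmxC_mul trmxCK !mxE.
have -> : (z^t* *m (Z + eta^-1 *: (y *m y^t*)) *m z) 0 0
          = (z^t* *m Z *m z) 0 0 + eta^-1 * (b^* * b).
  rewrite mulmxDr mulmxDl -scalemxAr -scalemxAl mxE [X in _ + X]mxE.
  rewrite !mulmxA -mulmxA [z^t* *m y]mx11_scalar mul_scalar_mx mxE.
  by rewrite zy -scalemxAl [X in _ * X]mxE.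
have q0 := pZ z; set q := (z^t* *m Z *m z) 0 0 in q0 *.
have [eta_0|etan0] := eqVneq eta 0.
  by rewrite eta_0 /b y0 // trmxC0 mul0mx mxE rmorph0 invr0 !(mul0r, mulr0, add0r, addr0).
have etar : eta^* = eta by rewrite geC0_conj.
have -> : k^* * eta * k + k^* * b + b^* * k + (q + eta^-1 * (b^* * b))
          = eta^-1 * ((eta * k + b) * (eta * k + b)^*) + q.
  by rewrite rmorphD rmorphM /= etar; field.
by rewrite addr_ge0 // mulr_ge0 ?invr_ge0 ?mul_conjC_ge0.
Qed.

Lemma trig_sylvester_eq0 n k (T : 'M[C]_n) (t : C) (v : 'M[C]_(n, k)) :
  is_trig_mx T -> (forall i, 'Re (T i i) < 0) -> 'Re t < 0 ->
  T *m v + t *: v = 0 -> v = 0.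
Proof.
move=> Ttrig ReT Ret; rewrite -mul_scalar_mx -mulmxDl => Tv0.
have Tt_trig : is_trig_mx (T + t%:M).
  apply/is_trig_mxP => i j ltij; rewrite !mxE (is_trig_mxP Ttrig) // add0r.
  by have /negPf-> : i != j by apply: contraTneq ltij => ->; rewrite ltnn.
suff Tt_unit : T + t%:M \in unitmx by rewrite -(mulKmx Tt_unit v) Tv0 mulmx0.
rewrite unitmxE det_trig // unitfE; apply/prodf_neq0 => i _.
rewrite !mxE eqxx mulr1n; apply/eqP => Tt0.
by have := ltrD (ReT i) Ret; rewrite addr0 -raddfD /= Tt0 raddf0 ltxx.
Qed.

Lemma lyap_scalar_ge0 (s eta w : C) :
  'Re s < 0 -> 0 <= w -> s * eta + eta * s^* + w = 0 -> 0 <= eta.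
Proof.
move=> Res w0 eq; have ss : s + s^* < 0 by move: Res; rewrite ReE pmulr_llt0.
have wE : w = eta * - (s + s^*).
  by apply/eqP; rewrite -subr_eq0 -eq; apply/eqP; ring.
by move: w0; rewrite wE pmulr_lge0 // oppr_gt0.
Qed.

Lemma lyap_block_offdiag n (s eta : C) (c y : 'cV[C]_n) (u v : 'rV[C]_n) (T2 : 'M[C]_n) :
  is_trig_mx T2 -> (forall i, 'Re (T2 i i) < 0) -> 'Re s < 0 -> eta^* = eta ->
  s *: u + (eta *: c^t* + u *m T2^t*) + v = 0 ->
  eta *: c + T2 *m y + s^* *: y + v^t* = 0 -> u = y^t*.
Proof.
move=> T2trig ReT2 Res etar e12 e21; have Res' : 'Re s^* < 0 by rewrite Re_conj.
have e12' : T2 *m u^t* + s^* *: u^t* + (eta *: c + v^t*) = 0.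
  move/(congr1 (fun M => M^t*)): e12; rewrite trmxC0 !trmxCD !trmxCZ trmxC_mul.
  by rewrite !trmxCK etar => <-; mxring.
have e21' : T2 *m y + s^* *: y + (eta *: c + v^t*) = 0 by rewrite -e21; mxring.
have : T2 *m (u^t* - y) + s^* *: (u^t* - y) = 0.
  by rewrite -(subrr 0) -{1}e12' -e21' mulmxBr scalerBr; mxring.
move/(trig_sylvester_eq0 T2trig ReT2 Res')/eqP; rewrite subr_eq0 => /eqP <-.
by rewrite trmxCK.
Qed.

(* The degenerate case eta = 0 is included: there eta^-1 = 0, and y and v must vanish. *)
Lemma lyap_schur_complement n (s eta w : C) (c y : 'cV[C]_n) (v : 'rV[C]_n)
    (T2 Y2 W2 : 'M[C]_n) :
  eta^* = eta -> (eta = 0 -> y = 0 /\ v = 0) ->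
  s * eta + eta * s^* + w = 0 ->
  T2 *m y + eta *: c + s^* *: y + v^t* = 0 ->
  c *m y^t* + T2 *m Y2 + y *m c^t* + Y2 *m T2^t* + W2 = 0 ->
  T2 *m (Y2 - eta^-1 *: (y *m y^t*)) + (Y2 - eta^-1 *: (y *m y^t*)) *m T2^t*
  + (col_mx (- eta^-1 *: y^t*) 1%:M)^t* *m block_mx w%:M v (v^t*) W2
    *m col_mx (- eta^-1 *: y^t*) 1%:M = 0.
Proof.
move=> etar eta0 e11 e21 e22.
have wE : w = - (eta * (s + s^*)).
  by apply/eqP; rewrite -subr_eq0 -e11 opprK; apply/eqP; ring.
have Ty : T2 *m y = - (eta *: c + s^* *: y + v^t*).
  by rewrite -[LHS]subr0 -e21; mxring.
have yT : y^t* *m T2^t* = - (eta *: c^t* + s *: y^t* + v).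
  by rewrite -trmxC_mul Ty trmxCN !trmxCD !trmxCZ etar conjCK trmxCK.
have TY : T2 *m Y2 = - (c *m y^t* + y *m c^t* + W2) - Y2 *m T2^t*.
  by rewrite -[LHS]subr0 -e22; mxring.
have etaVr : (eta^-1)^* = eta^-1 by rewrite fmorphV /= etar.
have WG : (col_mx (- eta^-1 *: y^t*) 1%:M)^t* *m block_mx w%:M v (v^t*) W2
            *m col_mx (- eta^-1 *: y^t*) 1%:M
          = (eta^-1 * w * eta^-1) *: (y *m y^t*) - eta^-1 *: (v^t* *m y^t*)
            - eta^-1 *: (y *m v) + W2.
  rewrite trmxC_col trmxCZ trmxCK rmorphN /= etaVr trmxC_scalar conjC1.
  rewrite mul_row_block mul_row_col !mulmx1 !mul1mx !mulmxDl.
  rewrite -!scalemxAl !mul_mx_scalar ?mul_scalar_mx -!scalemxAr !scalerA -!scalemxAl.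
  mxring.
rewrite WG; have [/eta0[y0 v0]|etan0] := eqVneq eta 0.
  by rewrite -e22 y0 v0 trmxC0 !(mul0mx, mulmx0, scaler0, oppr0, subr0, add0r, addr0).
rewrite mulmxBr mulmxBl -!scalemxAr -!scalemxAl mulmxA Ty -mulmxA yT TY.
rewrite mulNmx mulmxN !mulmxDl !mulmxDr -!scalemxAl -!scalemxAr wE.
by apply/matrixP => ? ?; rewrite !mxE; field.
Qed.

Lemma lyapunov_trig n (T : 'M[C]_n) : is_trig_mx T -> (forall i, 'Re (T i i) < 0) ->
  forall Y W : 'M[C]_n, T *m Y + Y *m T^t* + W = 0 -> W^t* = W -> psdmx W ->
  Y^t* = Y /\ psdmx Y.
Proof.
(* The corner entry eta of Y is forced nonnegative and the Schur complement
   Y2 - eta^-1 y y^* solves the Lyapunov equation of the smaller triangular block. *)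
move=> Ttrig; move: n T Ttrig; apply: trigsqmx_ind => [|n x c T2 T2trig IH] ReT Y W.
  by move=> _ _ _; split=> [|z]; rewrite ?[z]flatmx0 ?mulmx0 ?mxE // !flatmx0.
have Rex : 'Re (x 0 0) < 0 by have := ReT (lshift n 0); rewrite block_mxEul.
have ReT2 i : 'Re (T2 i i) < 0 by have := ReT (rshift 1 i); rewrite block_mxEdr.
rewrite -[Y]submxK -[W]submxK.
move: (ulsubmx Y) (ursubmx Y) (dlsubmx Y) (drsubmx Y) => e u y Y2.
move: (ulsubmx W) (ursubmx W) (dlsubmx W) (drsubmx W) => w v v' W2 eq hW pW.
have := hW; rewrite trmxC_block => /eq_block_mx[_ _ v'E W2h]; subst v'.
move: (mx11_scalar x) (mx11_scalar e) (mx11_scalar w) Rex.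
move: (x 0 0) (e 0 0) (w 0 0) => s eta w' xE eE wE Res; subst x e w.
rewrite !trmxC_block trmxC0 trmxC_scalar !mulmx_block !add_block_mx in eq.
have /eq_block_mx[e11 e12 e21 e22] := etrans eq (esym (block_mx0 _ _ _ _ _)).
rewrite !(mul0mx, mulmx0, addr0, add0r) !mul_scalar_mx !mul_mx_scalar in e11 e12 e21 e22.
have {}e11 : s * eta + eta * s^* + w' = 0.
  by move/matrixP/(_ 0 0): e11; rewrite !mxE eqxx !mulr1n.
have w0 : 0 <= w'.
  have := pW (col_mx 1%:M 0); rewrite block_qform conjC1 !mulmx0 !mxE.
  by rewrite rmorph0 !(mul1r, mulr1, mulr0, mul0r, addr0).
have eta0 := lyap_scalar_ge0 Res w0 e11.
have etar : eta^* = eta by rewrite geC0_conj.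
have uE := lyap_block_offdiag T2trig ReT2 Res etar e12 e21; subst u.
have Res' : 'Re s^* < 0 by rewrite Re_conj.
have e21' : T2 *m y + s^* *: y + (eta *: c + v^t*) = 0 by rewrite -e21; mxring.
have eta0y : eta = 0 -> y = 0 /\ v = 0.
  move=> eta_0; have w'0 : w' = 0 by rewrite -e11 eta_0; ring.
  have v0 : v = 0 by move: pW; rewrite w'0; exact: psdmx_block_corner.
  split=> //; apply: (trig_sylvester_eq0 T2trig ReT2 Res').
  by rewrite -e21' eta_0 v0 trmxC0 scale0r !addr0.
have e21'' : T2 *m y + eta *: c + s^* *: y + v^t* = 0 by rewrite -e21; mxring.
rewrite addrA in e22.
have [hZ pZ] := IH ReT2 _ _ (lyap_schur_complement etar eta0y e11 e21'' e22)
  (trmxC_congr _ hW) (psdmx_congr _ pW).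
set Z := Y2 - _ in hZ pZ; have -> : Y2 = Z + eta^-1 *: (y *m y^t*) by rewrite subrK.
split; last by apply: psdmx_schur_block => // /eta0y[].
rewrite trmxC_block trmxC_scalar etar trmxCK trmxCD hZ trmxCZ trmxC_mul trmxCK.
by rewrite fmorphV /= etar.
Qed.

Lemma lyapunov_psdmx n (M : 'M[C]_n) : (forall a, eigenvalue M a -> 'Re a < 0) ->
  forall Y W : 'M[C]_n, M *m Y + Y *m M^t* + W = 0 -> W^t* = W -> psdmx W ->
  Y^t* = Y /\ psdmx Y.
Proof.
case: n M => [|n] M ReM Y W eq hW pW.
  by split=> [|z]; rewrite ?[z]flatmx0 ?mulmx0 ?mxE // !flatmx0.
have [P Punit Ptrig] := Schur M (ltn0Sn n).
have PtP : P^t* *m P = 1%:M by rewrite -invmx_unitary // mulVmx ?unitarymx_unit.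
have {}Ptrig : is_trig_mx (P *m M *m P^t*) by rewrite -conjymx.
set T := P *m M *m P^t* in Ptrig.
have ReT i : 'Re (T i i) < 0.
  apply: ReM; have := eigenvalue_trig i Ptrig; rewrite /T -conjymx //.
  by apply: eigenvalue_conjmx; rewrite ?submx_full ?row_full_unit ?row_free_unit
    ?unitarymx_unit.
have eqT : T *m (P *m Y *m P^t*) + (P *m Y *m P^t*) *m T^t* + P *m W *m P^t* = 0.
  rewrite -(mul0mx _ (P^t*)) -(mulmx0 _ P) -eq !mulmxDr !mulmxDl.
  rewrite /T !trmxC_mul trmxCK !mulmxA -[P *m M *m P^t* *m P]mulmxA PtP mulmx1.
  by rewrite -[P *m Y *m P^t* *m P]mulmxA PtP mulmx1.
have hW' := trmxC_congr (P^t*) hW; have pW' := psdmx_congr (P^t*) pW.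
rewrite trmxCK in hW' pW'.
have [hY pY] := lyapunov_trig Ptrig ReT eqT hW' pW'.
have -> : Y = P^t* *m (P *m Y *m P^t*) *m P.
  by rewrite !mulmxA PtP mul1mx -mulmxA PtP mulmx1.
by split; [exact: trmxC_congr | exact: psdmx_congr].
Qed.

End ComplexLyapunov.

Section Transpose.
Variable R : pzRingType.

Lemma trmxD m n (A B : 'M[R]_(m, n)) : (A + B)^T = A^T + B^T.
Proof. by apply/matrixP => i j; rewrite !mxE. Qed.

Lemma trmxN m n (A : 'M[R]_(m, n)) : (- A)^T = - A^T.
Proof. by apply/matrixP => i j; rewrite !mxE. Qed.

Lemma trmxZ m n a (A : 'M[R]_(m, n)) : (a *: A)^T = a *: A^T.
Proof. by apply/matrixP => i j; rewrite !mxE. Qed.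

End Transpose.

Section LyapunovOperator.
Variable R : comRingType.

Definition lyap n (A X : 'M[R]_n) := A^T *m X + X *m A.

Lemma lyapB n (A X Y : 'M[R]_n) : lyap A (X - Y) = lyap A X - lyap A Y.
Proof. by rewrite /lyap mulmxBr mulmxBl addrACA opprD. Qed.

Lemma lyapN n (A X : 'M[R]_n) : lyap A (- X) = - lyap A X.
Proof. by rewrite /lyap mulmxN mulNmx opprD. Qed.

Lemma lyap_feedback_square n q (A X : 'M[R]_n) (H : 'M[R]_(n, q)) (K : 'M[R]_(q, n)) :
  X^T = X ->
  lyap (A + H *m K) X + K^T *m K
  = lyap (A - H *m (H^T *m X)) X + (H^T *m X)^T *m (H^T *m X)
    + (K + H^T *m X)^T *m (K + H^T *m X).
Proof.
move=> Xsym; rewrite /lyap !(trmxD, trmxN, trmx_mul, trmxK) Xsym.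
rewrite !mulmxDl !mulmxDr !mulNmx !mulmxN !mulmxA; mxring.
Qed.

End LyapunovOperator.

Section RealLyapunov.
Variable R : realType.
Local Open Scope sesquilinear_scope.

Lemma cmxE m n (M : 'M[R]_(m, n)) : cmx M = map_mx (real_complex R) M.
Proof. by []. Qed.

Lemma cmxM m n p (A : 'M[R]_(m, n)) (B : 'M[R]_(n, p)) : cmx (A *m B) = cmx A *m cmx B.
Proof. by rewrite !cmxE map_mxM. Qed.

Lemma cmxD m n (A B : 'M[R]_(m, n)) : cmx (A + B) = cmx A + cmx B.
Proof. by rewrite !cmxE map_mxD. Qed.

Lemma cmx0 m n : cmx (0 : 'M[R]_(m, n)) = 0.
Proof. by rewrite cmxE map_mx0. Qed.

Lemma cmxT m n (A : 'M[R]_(m, n)) : cmx A^T = (cmx A)^T.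
Proof. by rewrite !cmxE map_trmx. Qed.

Lemma trmxC_cmx m n (A : 'M[R]_(m, n)) : (cmx A)^t* = cmx A^T.
Proof. by apply/matrixP => i j; rewrite !mxE; exact: conjc_real. Qed.

Lemma cmx_inj m n : injective (@cmx R m n).
Proof. by move=> A B; rewrite !cmxE => /map_mx_inj; apply; exact: complexI. Qed.

Lemma ReC_lt0 (a : R[i]) : ('Re a < 0) = (complex.Re a < 0).
Proof. by rewrite -complexRe ltcR. Qed.

Lemma psdmx_cmx n (M : 'M[R]_n) : possemidef M -> psdmx (cmx M).
Proof.
case=> Msym Mpsd x.
pose u := map_mx (@complex.Re R) x; pose v := map_mx (@complex.Im R) x.
have xE : x = cmx u + 'i%C *: cmx v.
  by apply/matrixP => i j; rewrite !mxE [LHS]complexE.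
have iC : ('i%C : R[i])^* = - 'i%C by apply/eqP; rewrite eq_complex /= oppr0 !eqxx.
have vMu : v^T *m M *m u = u^T *m M *m v.
  have tr11 (X : 'M[R]_1) : X^T = X by apply/matrixP => i j; rewrite !ord1 mxE.
  by rewrite -[LHS]tr11 !trmx_mul trmxK Msym mulmxA.
have -> : x^t* *m cmx M *m x = cmx (u^T *m M *m u + v^T *m M *m v).
  rewrite xE trmxCD trmxCZ iC !trmxC_cmx !mulmxDl !mulmxDr -!scalemxAl -!scalemxAr.
  rewrite -!cmxM vMu cmxD scalerA.
  by rewrite scaleNr addrA addrK mulNr -expr2 sqr_i opprK scale1r.
by rewrite mxE ler0c mxE addr_ge0.
Qed.

Lemma possemidef_cmx n (M : 'M[R]_n) :
  (cmx M)^t* = cmx M -> psdmx (cmx M) -> possemidef M.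
Proof.
move=> hM pM; split; first by apply: cmx_inj; rewrite -trmxC_cmx.
by move=> x; have := pM (cmx x); rewrite trmxC_cmx -!cmxM mxE ler0c.
Qed.

Lemma possemidef_gram m n (F : 'M[R]_(m, n)) : possemidef (F^T *m F).
Proof.
apply: possemidef_cmx; first by rewrite trmxC_cmx trmx_mul trmxK.
by rewrite cmxM -trmxC_cmx; exact: psdmx_gram.
Qed.

Lemma lyapunov_possemidef n (A X W : 'M[R]_n) :
  hurwitz A -> lyap A X + W = 0 -> possemidef W -> possemidef X.
Proof.
move=> hA eq pW.
have ReA a : eigenvalue (cmx A^T) a -> 'Re a < 0.
  by rewrite cmxT eigenvalue_tr ReC_lt0; exact: hA.
have eqC : cmx A^T *m cmx X + cmx X *m (cmx A^T)^t* + cmx W = 0.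
  by rewrite trmxC_cmx trmxK -!cmxM -!cmxD eq cmx0.
have hW : (cmx W)^t* = cmx W by rewrite trmxC_cmx pW.1.
have [hX pX] := lyapunov_psdmx ReA eqC hW (psdmx_cmx pW).
exact: possemidef_cmx.
Qed.

Lemma lyap_feedback_hurwitz n k (A X W : 'M[R]_n) (H : 'M[R]_(n, k)) (F : 'M[R]_(k, n)) :
  hurwitz (A + H *m F) -> lyap A X + F^T *m F + W = 0 ->
  possemidef X -> possemidef W -> hurwitz A.
Proof.
move=> hAHF eq pX pW lam; rewrite -eigenvalue_tr => /eigenvalueP [x' xA xn0].
rewrite ltNge; apply/negP => Relam.
set x := x'^T.
have Ax : cmx A *m x = lam *: x by rewrite /x -[cmx A]trmxK -trmx_mul xA linearZ.
have xAt : x^t* *m cmx A^T = lam^* *: x^t* by rewrite -trmxC_cmx -trmxC_mul Ax trmxCZ.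
pose qf (M : 'M[R[i]]_n) := (x^t* *m M *m x) 0 0.
have qfD M N : qf (M + N) = qf M + qf N by rewrite /qf mulmxDr mulmxDl mxE.
have key : qf (cmx A^T *m cmx X) + qf (cmx X *m cmx A) + qf (cmx (F^T *m F)) + qf (cmx W) = 0.
  by rewrite -!qfD -!cmxM -!cmxD eq cmx0 /qf mulmx0 mul0mx mxE.
have qfAX : qf (cmx A^T *m cmx X) = lam^* * qf (cmx X).
  by rewrite /qf mulmxA xAt -!scalemxAl mxE.
have qfXA : qf (cmx X *m cmx A) = lam * qf (cmx X).
  by rewrite /qf -mulmxA -[cmx X *m cmx A *m x]mulmxA Ax -!scalemxAr mxE mulmxA.
have qfF : qf (cmx (F^T *m F)) = ((cmx F *m x)^t* *m (cmx F *m x)) 0 0.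
  by rewrite /qf cmxM -trmxC_cmx mulmxA -trmxC_mul -mulmxA.
have Fx : cmx F *m x = 0.
  apply: cnorm_eq0; move: key (psdmx_cmx pX x) (psdmx_cmx pW x) (cnorm_ge0 (cmx F *m x)).
  rewrite qfAX qfXA qfF -/(qf _) -/(qf _).
  move: (qf (cmx X)) (qf (cmx W)) (_ 0 0) => d w f eq0 d0 w0 f0.
  have lam0 : 0 <= lam^* + lam.
    have : 0 <= 'Re lam by rewrite real_leNgt ?Creal_Re ?real0 // ReC_lt0 -leNgt.
    by rewrite ReE pmulr_lge0 ?invr_gt0 ?ltr0n // addrC.
  apply/eqP; rewrite eq_le f0 andbT -eq0 -mulrDl [_ + f]addrC -addrA lerDl.
  by rewrite addr_ge0 ?mulr_ge0.
have : complex.Re lam < 0.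
  apply: hAHF; rewrite -eigenvalue_tr; apply/eigenvalueP; exists x^T.
    by rewrite -trmx_mul cmxD cmxM mulmxDl -mulmxA Fx mulmx0 addr0 Ax linearZ.
  by rewrite /x trmxK.
by rewrite ltNge Relam.
Qed.

End RealLyapunov.

Section EntrywiseLimits.
Variable R : realType.

Definition mxcvg m n (f : nat -> 'M[R]_(m, n)) (M : 'M[R]_(m, n)) :=
  forall i j, (fun k => f k i j) @ \oo --> M i j.

Lemma cvg_sum_ord p (u : nat -> 'I_p -> R) (v : 'I_p -> R) :
  (forall l, (fun k => u k l) @ \oo --> v l) ->
  (fun k => \sum_(l < p) u k l) @ \oo --> \sum_(l < p) v l.
Proof. by move=> uv; exact: (cvg_big add_continuous (Ff := fun l k => u k l) _ (fun l _ => uv l)). Qed.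

Lemma mxcvg_cst m n (M : 'M[R]_(m, n)) : mxcvg (fun=> M) M.
Proof. by move=> i j; exact: cvg_cst. Qed.

Lemma mxcvgD m n (f g : nat -> 'M[R]_(m, n)) M N :
  mxcvg f M -> mxcvg g N -> mxcvg (fun k => f k + g k) (M + N).
Proof. by move=> fM gN i j; rewrite mxE; under eq_fun do rewrite mxE; exact: cvgD. Qed.

Lemma mxcvgN m n (f : nat -> 'M[R]_(m, n)) M : mxcvg f M -> mxcvg (fun k => - f k) (- M).
Proof. by move=> fM i j; rewrite mxE; under eq_fun do rewrite mxE; exact: cvgN. Qed.

Lemma mxcvgT m n (f : nat -> 'M[R]_(m, n)) M : mxcvg f M -> mxcvg (fun k => (f k)^T) M^T.
Proof. by move=> fM i j; rewrite mxE; under eq_fun do rewrite mxE; exact: fM. Qed.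

Lemma mxcvgM m n p (f : nat -> 'M[R]_(m, n)) (g : nat -> 'M[R]_(n, p)) M N :
  mxcvg f M -> mxcvg g N -> mxcvg (fun k => f k *m g k) (M *m N).
Proof.
move=> fM gN i j; rewrite mxE; under eq_fun do rewrite mxE.
by apply: cvg_sum_ord => l; exact: cvgM.
Qed.

Lemma mxcvg_shiftS m n (f : nat -> 'M[R]_(m, n)) M : mxcvg f M -> mxcvg (fun k => f k.+1) M.
Proof. by move=> fM i j; rewrite (cvg_shiftS (fun k => f k i j)); exact: fM. Qed.

Lemma mxcvg_unique m n (f : nat -> 'M[R]_(m, n)) M N : mxcvg f M -> mxcvg f N -> M = N.
Proof. by move=> fM fN; apply/matrixP => i j; exact: cvg_unique (fM i j) (fN i j). Qed.

Lemma cvg_frob0 m n (f : nat -> 'M[R]_(m, n)) :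
  mxcvg f 0 -> (fun k => frob (f k)) @ \oo --> (0 : R^o).
Proof.
move=> f0; rewrite -sqrtr0; apply: (continuous_cvg _ (@sqrt_continuous R 0)).
have sum0 : \sum_(i < m) \sum_(j < n) (0 : 'M[R]_(m, n)) i j ^+ 2 = 0.
  by rewrite big1 // => i _; rewrite big1 // => j _; rewrite mxE expr0n.
rewrite -[X in _ --> X]sum0; apply: cvg_sum_ord => i; apply: cvg_sum_ord => j; under eq_fun do rewrite expr2.
by rewrite expr2; apply: cvgM; exact: f0.
Qed.

Lemma mxcvg_lyap n (f g : nat -> 'M[R]_n) A X :
  mxcvg f A -> mxcvg g X -> mxcvg (fun k => lyap (f k) (g k)) (lyap A X).
Proof. by move=> fA gX; apply: mxcvgD; apply: mxcvgM => //; exact: mxcvgT. Qed.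

Definition qform n (M : 'M[R]_n) (x : 'cV[R]_n) := (x^T *m M *m x) 0 0.

Lemma qformD n (M N : 'M[R]_n) x : qform (M + N) x = qform M x + qform N x.
Proof. by rewrite /qform mulmxDr mulmxDl mxE. Qed.

Lemma qformN n (M : 'M[R]_n) x : qform (- M) x = - qform M x.
Proof. by rewrite /qform mulmxN mulNmx mxE. Qed.

Lemma qform_delta n (M : 'M[R]_n) i k :
  ((delta_mx i 0 : 'cV_n)^T *m M *m (delta_mx k 0 : 'cV_n)) 0 0 = M i k.
Proof. by rewrite trmx_delta -rowE -colE !mxE. Qed.

Lemma symmetric_polar n (M : 'M[R]_n) i k : M^T = M ->
  M i k = (qform M (delta_mx i 0 + delta_mx k 0)
           - qform M (delta_mx i 0) - qform M (delta_mx k 0)) / 2.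
Proof.
have entryD (A B : 'M[R]_1) : (A + B) 0 0 = A 0 0 + B 0 0 by rewrite mxE.
move=> Msym; rewrite /qform [(_ + _)^T]linearD /= !mulmxDl !mulmxDr !entryD !qform_delta.
have -> : M k i = M i k by rewrite -{1}Msym mxE.
by field.
Qed.

Lemma mxcvg_qform n (f : nat -> 'M[R]_n) M x :
  mxcvg f M -> (fun k => qform (f k) x) @ \oo --> qform M x.
Proof.
move=> fM; have xfx := mxcvgM (mxcvgM (mxcvg_cst (M := x^T)) fM) (mxcvg_cst (M := x)).
exact: xfx.
Qed.

Lemma possemidef_anti n (M : 'M[R]_n) : possemidef M -> possemidef (- M) -> M = 0.
Proof.
move=> [Msym pM] [_ pNM].
have q0 x : qform M x = 0.
  apply/eqP; rewrite eq_le; apply/andP; split; last exact: pM.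
  by rewrite -oppr_ge0 -qformN; exact: pNM.
by apply/matrixP => i k; rewrite (symmetric_polar i k Msym) !q0 mxE !subrr mul0r.
Qed.

Lemma mxcvg_nonincreasing_psd n (f : nat -> 'M[R]_n) :
  (forall k, possemidef (f k)) -> (forall k, loewner_le (f k.+1) (f k)) ->
  exists2 M, mxcvg f M & possemidef M.
Proof.
move=> psd_f f_decr.
have qcvg x : cvgn (fun k => qform (f k) x).
  apply: nonincreasing_is_cvgn; last by exists 0 => _ [k _ <-]; exact: (psd_f k).2.
  apply/nonincreasing_seqP => k; rewrite -subr_ge0 -qformN -qformD.
  exact: (f_decr k).2.
pose L x := limn (fun k => qform (f k) x).
pose M := \matrix_(i, j)
  ((L (delta_mx i 0 + delta_mx j 0) - L (delta_mx i 0) - L (delta_mx j 0)) / 2).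
have fM : mxcvg f M.
  move=> i j; rewrite mxE; under eq_fun do rewrite (symmetric_polar i j (psd_f _).1).
  by apply: cvgMr_tmp; apply: cvgB; first apply: cvgB; exact: (qcvg _).
exists M => //; split.
  by apply/matrixP => i j; rewrite !mxE [delta_mx j 0 + _]addrC [in RHS]addrAC.
move=> x; change (0 <= qform M x); apply: (cvgr_to_ge (mxcvg_qform (x := x) fM)).
by apply: nearW => k; exact: (psd_f k).2.
Qed.

End EntrywiseLimits.

Section KleinmanIteration.
Variables (R : realType) (n q : nat) (As : 'M[R]_n) (H : 'M[R]_(n, q)).
Variables (b : nat -> 'M[R]_(q, n)) (X : nat -> 'M[R]_n).
Hypothesis As_stable : hurwitz As.
Hypothesis b0_stable : hurwitz (As + H *m b 0).
Hypothesis lyap_X : forall k, lyap (As + H *m b k) (X k) + (b k)^T *m b k = 0.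
Hypothesis b_next : forall k, b k.+1 = - (H^T *m X k).

Lemma kleinman_next_lyap k : (X k)^T = X k ->
  lyap (As + H *m b k.+1) (X k) + (b k.+1)^T *m b k.+1
  + (b k - b k.+1)^T *m (b k - b k.+1) = 0.
Proof.
move=> Xsym; rewrite -(lyap_X k) [RHS](lyap_feedback_square _ _ _ Xsym) b_next.
by rewrite mulmxN trmxN mulNmx mulmxN !opprK.
Qed.

Lemma kleinman_stable_psd k : hurwitz (As + H *m b k) /\ possemidef (X k).
Proof.
elim: k => [|k [stable_k psd_k]].
  by split=> //; exact: lyapunov_possemidef b0_stable (lyap_X 0) (possemidef_gram _).
have eq := kleinman_next_lyap psd_k.1.
have stable_k1 : hurwitz (As + H *m b k.+1).
  apply: (lyap_feedback_hurwitz (H := - H) _ eq psd_k (possemidef_gram _)).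
  by rewrite mulNmx addrK.
by split=> //; exact: lyapunov_possemidef stable_k1 (lyap_X k.+1) (possemidef_gram _).
Qed.

Lemma kleinman_decreasing k : loewner_le (X k.+1) (X k).
Proof.
have [[stable_k1 _] [_ [Xsym _]]] := (kleinman_stable_psd k.+1, kleinman_stable_psd k).
apply: (lyapunov_possemidef stable_k1 _ (possemidef_gram (b k - b k.+1))).
rewrite lyapB -(subrr 0) -{1}(kleinman_next_lyap Xsym) -(lyap_X k.+1).
move: (lyap _ (X k)) (lyap _ (X k.+1)) => a c.
by rewrite [RHS]addrAC opprD addrACA subrr addr0.
Qed.

Lemma kleinman_cvg0 : mxcvg X 0.
Proof.
have [Xinf XXinf psd_Xinf] := mxcvg_nonincreasing_psd
  (fun k => (kleinman_stable_psd k).2) kleinman_decreasing.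
suff Xinf0 : Xinf = 0 by rewrite -Xinf0.
pose G (Y : 'M[R]_n) := (H^T *m Y)^T *m (H^T *m Y).
have cvgG : mxcvg (fun k => G (X k)) (G Xinf).
  by apply: mxcvgM; [apply: mxcvgT|]; apply: mxcvgM => //; exact: mxcvg_cst.
have cvgA : mxcvg (fun k => As - H *m (H^T *m X k)) (As - H *m (H^T *m Xinf)).
  apply: mxcvgD; first exact: mxcvg_cst.
  by apply/mxcvgN/mxcvgM; [exact: mxcvg_cst | apply: mxcvgM => //; exact: mxcvg_cst].
have := mxcvgD (mxcvg_lyap cvgA (mxcvg_shiftS XXinf)) cvgG.
have -> : (fun k => lyap (As - H *m (H^T *m X k)) (X k.+1) + G (X k)) = fun=> 0.
  apply/funext => k; rewrite -(lyap_X k.+1) b_next mulmxN /G.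
  by rewrite trmxN mulNmx mulmxN opprK.
move/(mxcvg_unique (mxcvg_cst (M := 0))) => lim_eq.
have : lyap As (- Xinf) + G Xinf = 0.
  have := lyap_feedback_square As H 0 psd_Xinf.1.
  rewrite !mulmx0 !addr0 add0r -/(G Xinf) -lim_eq add0r.
  by rewrite lyapN => ->; rewrite addNr.
move/(lyapunov_possemidef As_stable)/(_ (possemidef_gram _)).
exact: possemidef_anti.
Qed.

End KleinmanIteration.

Lemma riccati_lyap_gap (F : fieldType) n q (AK PK P Q : 'M[F]_n) (D : 'M[F]_(n, q))
    (L : 'M[F]_(q, n)) (g : F) :
  g != 0 -> PK^T = PK ->
  AK^T *m PK + PK *m AK + Q + g^-2 *: (PK *m D *m D^T *m PK) = 0 ->
  (AK + D *m L)^T *m P + P *m (AK + D *m L) + Q - g ^+ 2 *: (L^T *m L) = 0 ->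
  lyap (AK + D *m L) (PK - P)
  + (g *: (L - g^-2 *: (D^T *m PK)))^T *m (g *: (L - g^-2 *: (D^T *m PK))) = 0.
Proof.
move=> g0 PKsym ric lyapP; rewrite -(subrr 0) -{1}ric -lyapP /lyap.
rewrite !(trmxD, trmxN, trmxZ, trmx_mul, trmxK) PKsym.
rewrite -!(scalemxAl, scalemxAr) !(mulmxDl, mulmxDr, mulNmx, mulmxN).
rewrite -!(scalemxAl, scalemxAr) !(scalerDr, scalerN, scalerA) !mulmxA.
by apply/matrixP => ? ?; rewrite !mxE; field.
Qed.

Theorem lemma6 (R : realType) (n m p q : nat)
  (A : 'M[R]_n) (B : 'M[R]_(n, m)) (C : 'M[R]_(p, n)) (D : 'M[R]_(n, q))
  (E : 'M[R]_(p, m)) (gamma : R)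
  (hQ : posdef (C^T *m C)) (hEC : E^T *m C = 0) (hR : posdef (E^T *m E))
  (hgamma : 0 < gamma)
  (K : 'M[R]_(m, n)) (hK : admissible A B C D E gamma K)
  (PK : 'M[R]_n)
  (hPK_pd : posdef PK)
  (hPK_ric : (A - B *m K)^T *m PK + PK *m (A - B *m K)
             + (C^T *m C + K^T *m (E^T *m E) *m K)
             + gamma^-2 *: (PK *m D *m D^T *m PK) = 0)
  (hPK_stab : hurwitz (A - B *m K + gamma^-2 *: (D *m D^T *m PK)))
  (L : nat -> 'M[R]_(q, n)) (P : nat -> 'M[R]_n)
  (hL0 : hurwitz (A - B *m K + D *m L 0%N))
  (hP : forall j : nat,
      (A - B *m K + D *m L j)^T *m P j + P j *m (A - B *m K + D *m L j)
      + (C^T *m C + K^T *m (E^T *m E) *m K)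
      - gamma ^+ 2 *: ((L j)^T *m L j) = 0)
  (hL : forall j : nat, L j.+1 = gamma^-2 *: ((D^T) *m P j)) :
  (forall j : nat, (0 < j)%N -> hurwitz (A - B *m K + D *m L j)) /\
  (forall j : nat, loewner_le (P j) (P j.+1) /\ loewner_le (P j) PK) /\
  ((fun j => frob (P j - PK)) @ \oo --> (0 : R^o)).
Proof.
have g0 : gamma != 0 by rewrite gt_eqF.
set AK := A - B *m K in hPK_ric hPK_stab hL0 hP *.
pose Ls := gamma^-2 *: (D^T *m PK); pose H := gamma^-1 *: D.
pose b k := gamma *: (L k - Ls); pose X k := PK - P k.
have closed_loop k : AK + D *m Ls + H *m b k = AK + D *m L k.
  have -> : H *m b k = D *m (L k - Ls).
    by rewrite /H /b -scalemxAl -scalemxAr scalerA mulVf // scale1r.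
  by rewrite mulmxBr addrA addrAC addrK.
have As_stable : hurwitz (AK + D *m Ls).
  suff <- : gamma^-2 *: (D *m D^T *m PK) = D *m Ls by exact: hPK_stab.
  by rewrite /Ls -scalemxAr mulmxA.
have b0_stable : hurwitz (AK + D *m Ls + H *m b 0) by rewrite closed_loop; exact: hL0.
have lyap_X k : lyap (AK + D *m Ls + H *m b k) (X k) + (b k)^T *m b k = 0.
  by rewrite closed_loop; exact: riccati_lyap_gap g0 hPK_pd.1 hPK_ric (hP k).
have b_next k : b k.+1 = - (H^T *m X k).
  rewrite /b /H /X /Ls hL trmxZ -scalemxAl mulmxBr.
  by apply/matrixP => ? ?; rewrite !mxE; field.
have stable_psd := kleinman_stable_psd As_stable b0_stable lyap_X b_next.
split; first by move=> j _; rewrite -closed_loop; exact: (stable_psd j).1.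
split=> [j|].
  split; last exact: (stable_psd j).2.
  rewrite /loewner_le -(_ : X j - X j.+1 = P j.+1 - P j); last first.
    by rewrite /X opprB addrC addrA subrK.
  exact: kleinman_decreasing As_stable b0_stable lyap_X b_next j.
apply: cvg_frob0; rewrite -oppr0.
have -> : (fun j => P j - PK) = fun j => - X j by apply/funext => j; rewrite opprB.
exact/mxcvgN/(kleinman_cvg0 As_stable b0_stable lyap_X b_next).
Qed.
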